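(* Let $\hat H_n=2^{-n}H_n$ be the monic Hermite polynomials, and let $(\rho_n)_{n\ge0}$ be positive real numbers such that, for some $0\le\nu\le1/4$, $$\frac{2\rho_{n-1}}{\rho_n}\le n^\nu,\quad n\ge1.$$ Let $K$ be a positive integer and $\gamma_0,\dots,\gamma_K$ real numbers with $\gamma_0=1$, $\gamma_K\neq0$. Then the polynomial $$q_n(x)=\sum_{j=0}^K\gamma_j\rho_{n-j}\hat H_{n-j}(x)$$ has only real zeros for $$n\ge\max\left\{6^{2\nu}\left(\frac{6^{\nu(K-1)}-1}{6^\nu-1}\right)^24^{K-2}\max{}^2\{|\gamma_j|:2\le j\le K\},\ 2K\right\}.$$ Moreover, the zeros are simple and interlace the zeros of $H_{n-1}$.
   Context: $H_n$ denotes the Hermite polynomial of degree $n$ (orthogonal with respect to $e^{-x^2}dx$ on $\mathbb{R}$, leading coefficient $2^n$); the monic ones satisfy $x\hat H_n=\hat H_{n+1}+\frac n2\hat H_{n-1}$. When $\nu=0$ the quotient $\frac{6^{\nu(K-1)}-1}{6^\nu-1}$ is to be read as $\sum_{j=0}^{K-2}6^{\nu j}=K-1$. Interlacing: given two finite sets $U,V$ of reals, $U$ interlaces $V$ if $\min U<\min V$ and between any two consecutive elements of either set there is an element of the other; here $U$ is the zero set of $q_n$ and $V$ that of $H_{n-1}$. *)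

From HB Require Import structures.
From mathcomp Require Import all_boot all_order all_algebra.
From mathcomp Require Import complex.
From mathcomp Require Import reals exp.
Set Implicit Arguments. Unset Strict Implicit. Unset Printing Implicit Defensive.
Import Order.TTheory GRing.Theory Num.Theory.
Local Open Scope ring_scope.

(* Physicists' Hermite polynomials: H_0 = 1, H_1 = 2x,
   H_{n+1} = 2x H_n - 2n H_{n-1}  (leading coefficient 2^n). *)
Fixpoint hermite_pair (R : nzRingType) (n : nat) : {poly R} * {poly R} :=
  match n with
  | 0 => (1, 0)
  | m.+1 => let (h, hp) := hermite_pair R m in
            ((2%:R *: 'X) * h - (2 * m)%:R *: hp, h)
  end.

Definition hermite (R : nzRingType) (n : nat) : {poly R} := (hermite_pair R n).1.

Definition hermite_monic (R : fieldType) (n : nat) : {poly R} :=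
  (2%:R ^- n) *: hermite R n.

Definition consecutive_sep (R : realDomainType) (U V : R -> Prop) : Prop :=
  forall a b, U a -> U b -> a < b -> (forall c, U c -> ~ (a < c < b)) ->
  exists v, V v /\ a < v < b.

Definition interlaces (R : realDomainType) (U V : R -> Prop) : Prop :=
  (exists u, U u /\ forall v, V v -> u < v) /\
  consecutive_sep U V /\ consecutive_sep V U.

(* sum_{j=0}^{K-2} 6^{nu j}, which equals (6^{nu(K-1)}-1)/(6^nu-1) for nu>0
   and K-1 for nu=0. *)
Definition geom6 (R : realType) (nu : R) (K : nat) : R :=
  \sum_(j < K.-1) powR 6 (nu * j%:R).

(* The threshold for n. For K = 1 the max over the empty set is 0. *)
Definition threshold (R : realType) (nu : R) (K : nat) (gamma : nat -> R) : R :=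
  Num.max
    (powR 6 (2 * nu) * (geom6 nu K) ^+ 2 * powR 4 (K%:R - 2)
       * (\big[Num.max/0]_(2 <= j < K.+1) `|gamma j|) ^+ 2)
    (2 * K)%:R.

Definition q_poly (R : realType) (rho gamma : nat -> R) (K n : nat) : {poly R} :=
  \sum_(0 <= j < K.+1) (gamma j * rho (n - j)%N) *: hermite_monic R (n - j)%N.

(* At a zero z of \hat H_{n-1} the recurrence gives \hat H_n(z) = -(n-1)/2 \hat H_{n-2}(z), so
   q_n(z) = -rho_n (n-1)/2 \hat H_{n-2}(z) + sum_{j>=2} gamma_j rho_{n-j} \hat H_{n-j}(z).
   Running the recurrence backwards from \hat H_{n-1}(z) = 0, with z^2 < 2n, gives
   |\hat H_{n-1-k}(z)| <= 4^(k-1) n^(nu(1-k)) |\hat H_{n-2}(z)|, and the hypothesis on rho gives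
   rho_{n-j} <= rho_n (n^nu/2)^j.  Above the threshold the tail is therefore dominated by the
   first term, so q_n(z) has the sign of -\hat H_{n-2}(z).  These signs alternate along the
   zeros of \hat H_{n-1} (which interlace those of \hat H_{n-2}, by the same sign-change argument
   run inductively), so with the signs of q_n at +-infinity the intermediate value theorem puts
   a zero of q_n in each of n disjoint intervals.  As deg q_n = n these are all its zeros: they
   are real, simple, and interlace the zeros of \hat H_{n-1}. *)

From HB Require Import structures.
From mathcomp Require Import all_boot all_order all_algebra.
From mathcomp Require Import complex polyrcf.
From mathcomp Require Import reals exp.
From mathcomp Require Import ring lra zify.
Set Implicit Arguments. Unset Strict Implicit. Unset Printing Implicit Defensive.
Import Order.TTheory GRing.Theory Num.Theory.
Local Open Scope ring_scope.

(** * Monic Hermite polynomials *)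

Lemma hermiteSS (R : nzRingType) k :
  hermite R k.+2 = 2%:R *: 'X * hermite R k.+1 - (2 * k.+1)%:R *: hermite R k.
Proof. by rewrite /hermite /=; case: hermite_pair. Qed.

Section HermiteMonic.
Variable R : numFieldType.
Local Notation hm := (hermite_monic R).

Lemma hermite_monic0 : hm 0 = 1.
Proof. by rewrite /hermite_monic /hermite /= expr0 invr1 scale1r. Qed.

Lemma hermite_monic1 : hm 1 = 'X.
Proof.
by rewrite /hermite_monic /hermite /= mulr1 scaler0 subr0 scalerA mulVf ?scale1r ?pnatr_eq0.
Qed.

Lemma hermite_monicSS k : hm k.+2 = 'X * hm k.+1 - (k.+1%:R / 2) *: hm k.
Proof.
have two_neq0 : (2 : R) != 0 by rewrite pnatr_eq0.
rewrite /hermite_monic hermiteSS scalerBr -scalerAl !scalerA -scalerAr; congr (_ - _).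
  by congr (_ *: _); rewrite !exprS !invfM; field; rewrite expf_neq0.
by congr (_ *: _); rewrite natrM !exprS !invfM; field; rewrite expf_neq0.
Qed.

Lemma horner_hermite_monicSS k x :
  (hm k.+2).[x] = x * (hm k.+1).[x] - k.+1%:R / 2 * (hm k).[x].
Proof. by rewrite hermite_monicSS !hornerE. Qed.

Lemma hermite_monic_size_monic k : size (hm k) = k.+1 /\ hm k \is monic.
Proof.
suff [] : (size (hm k) = k.+1 /\ hm k \is monic) /\
          (size (hm k.+1) = k.+2 /\ hm k.+1 \is monic) by [].
elim: k => [|k [[sz0 _] [sz1 mon1]]].
  by rewrite hermite_monic0 hermite_monic1 size_poly1 size_polyX monic1 monicX.
have sizeX : size ('X * hm k.+1) = k.+3 by rewrite mulrC size_mulX ?monic_neq0 ?sz1.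
have small : (size ((k.+1%:R / 2) *: hm k)%R < size ('X * hm k.+1)%R)%N.
  by rewrite sizeX (leq_ltn_trans (size_scale_leq _ _)) // sz0.
rewrite hermite_monicSS size_polyDl ?size_polyN // sizeX; split=> //; split=> //.
by rewrite monicE lead_coefDl ?size_polyN // mulrC lead_coefMX -monicE.
Qed.

Lemma horner_hermite_monicN k x : (hm k).[- x] = (-1) ^+ k * (hm k).[x].
Proof.
suff [] : (hm k).[- x] = (-1) ^+ k * (hm k).[x] /\
          (hm k.+1).[- x] = (-1) ^+ k.+1 * (hm k.+1).[x] by [].
elim: k => [|k [IH0 IH1]].
  by rewrite hermite_monic0 hermite_monic1 !hornerE; split; ring.
by split=> //; rewrite !horner_hermite_monicSS IH0 IH1 !exprS; ring.
Qed.

Lemma root_hermite k x : root (hermite R k) x = root (hm k) x.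
Proof. by rewrite /hermite_monic rootZ // invr_eq0 expf_neq0 // pnatr_eq0. Qed.

End HermiteMonic.

Section HermiteMonicReal.
Variable R : realFieldType.
Local Notation hm := (hermite_monic R).

Lemma horner_hermite_monic_gt0 m x :
  0 < x -> (2 * m.-1)%:R <= x ^+ 2 -> 0 < (hm m).[x].
Proof.
move=> x_gt0 x_large; pose h k := (hm k).[x].
have inv k : (k < m)%N -> 0 < h k /\ x * h k <= 2 * h k.+1.
  elim: k => [|k IH] lt_km.
    by rewrite /h hermite_monic0 hermite_monic1 !hornerE; lra.
  have [hk_gt0 hk_le] := IH (ltnW lt_km).
  have k_le : k.+1%:R * 2 <= x ^+ 2.
    by apply: le_trans x_large; rewrite -natrM ler_nat; lia.
  split; first by nra.
  by rewrite /h horner_hermite_monicSS -/(h k) -/(h k.+1); nra.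
case: m x_large inv => [_ _|m _ inv]; first by rewrite hermite_monic0 hornerE.
by have [] := inv m (ltnSn m); rewrite /h; nra.
Qed.

Lemma root_hermite_monic_sqr_lt m y :
  (0 < m)%N -> root (hm m) y -> y ^+ 2 < (2 * m)%:R.
Proof.
move=> m_gt0 /eqP hy; rewrite ltNge; apply/negP => y_large.
have y_large' : (2 * m.-1)%:R <= y ^+ 2.
  by apply: le_trans y_large; rewrite ler_nat; lia.
have [y_lt0|y_gt0|y0] := ltrgtP y 0.
- have := @horner_hermite_monic_gt0 m (- y); rewrite sqrrN oppr_gt0.
  by rewrite horner_hermite_monicN hy mulr0 ltxx => /(_ y_lt0 y_large').
- by have := horner_hermite_monic_gt0 y_gt0 y_large'; rewrite hy ltxx.
- by move: y_large; rewrite y0 expr0n /= ler_nat; lia.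
Qed.

End HermiteMonicReal.

(** * Sign changes and interlacing *)

Definition increasing_upto (R : numDomainType) m (z : nat -> R) :=
  {in gtn m &, {homo z : i j / (i < j)%N >-> i < j}}.

Section IncreasingUpto.
Variable R : numDomainType.
Implicit Types (z : nat -> R) (m : nat).

Lemma increasing_upto_step m z :
  (forall i, (i.+1 < m)%N -> z i < z i.+1) -> increasing_upto m z.
Proof.
move=> step; apply: homo_ltn_in; first exact: lt_trans.
  by move=> i j /[!inE] _ jm k /andP[_ kj]; apply: ltn_trans jm.
by move=> i _ /[!inE]; apply: step.
Qed.

Lemma increasing_upto_le m z i j :
  increasing_upto m z -> (i <= j)%N -> (j < m)%N -> z i <= z j.
Proof.
move=> z_incr; rewrite leq_eqVlt => /predU1P[-> //|ij] jm.
by rewrite ltW // z_incr // inE (ltn_trans ij).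
Qed.

Lemma uniq_image_increasing m z :
  increasing_upto m z -> uniq [seq z i | i : 'I_m].
Proof.
move=> z_incr; rewrite map_inj_uniq ?enum_uniq // => i j zij; apply: val_inj.
have [ij|ji|//] := ltngtP i j.
- by have := z_incr i j (ltn_ord i) (ltn_ord j) ij; rewrite zij ltxx.
- by have := z_incr j i (ltn_ord j) (ltn_ord i) ji; rewrite zij ltxx.
Qed.

End IncreasingUpto.

Lemma mul_lt0_signr (R : realDomainType) k (x y : R) :
  0 < (-1) ^+ k * y -> (x * y < 0) = (0 < (-1) ^+ k.+1 * x).
Proof.
move=> sy; have s2 : (-1) ^+ k * (-1) ^+ k = 1 :> R.
  by rewrite -expr2 -exprM mulnC exprM sqrrN !expr1n.
have -> : x * y = ((-1) ^+ k * x) * ((-1) ^+ k * y) by rewrite mulrACA s2 mul1r.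
by rewrite pmulr_llt0 // exprS mulN1r mulNr oppr_gt0.
Qed.

Lemma signr_prod_subr (R : realDomainType) (z : nat -> R) x m i : (i <= m)%N ->
  (forall j, (j < i)%N -> z j < x) -> (forall j, (i <= j < m)%N -> x < z j) ->
  0 < (-1) ^+ (m - i) * \prod_(j < m) (x - z j).
Proof.
elim: m => [|m IH]; first by rewrite leqn0 => /eqP-> _ _; rewrite big_ord0 mulr1.
rewrite leq_eqVlt => /predU1P[-> lt_z _|im lt_z gt_z].
  by rewrite subnn mul1r prodr_gt0 // => j _; rewrite subr_gt0 lt_z.
have gt_z' j : (i <= j < m)%N -> x < z j.
  by move=> /andP[ij jm]; apply: gt_z; rewrite ij ltnW.
have := IH im lt_z gt_z'.
have : x - z m < 0 by rewrite subr_lt0 gt_z // -ltnS im ltnSn.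
by rewrite big_ord_recr /= subSn // exprS; nra.
Qed.

Lemma consecutive_sep_enum (R : realDomainType) (U V : R -> Prop) k (a : nat -> R) :
  increasing_upto k a -> (forall x, U x <-> exists2 i, (i < k)%N & x = a i) ->
  (forall i, (i.+1 < k)%N -> exists2 v, V v & a i < v < a i.+1) ->
  consecutive_sep U V.
Proof.
move=> a_incr U_enum sep _ _ /U_enum[i ik ->] /U_enum[j jk ->] lt_aij between.
have ij : (i < j)%N.
  rewrite ltnNge; apply/negP => ji.
  by have := increasing_upto_le a_incr ji ik; rewrite leNgt lt_aij.
have ji : j = i.+1.
  apply/eqP; rewrite eqn_leq ij andbT leqNgt; apply/negP => lt_ij.
  apply: (between (a i.+1)); first by apply/U_enum; exists i.+1 => //; apply: ltn_trans jk.
  by rewrite !a_incr // inE (ltn_trans _ jk).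
by subst j; have [v Vv v_in] := sep i jk; exists v.
Qed.

Lemma interlaces_enum (R : realDomainType) (U V : R -> Prop) m (w z : nat -> R) :
  increasing_upto m.+1 w -> increasing_upto m z ->
  (forall x, U x <-> exists2 i, (i < m.+1)%N & x = w i) ->
  (forall x, V x <-> exists2 i, (i < m)%N & x = z i) ->
  (forall i, (i < m)%N -> w i < z i < w i.+1) ->
  interlaces U V.
Proof.
move=> w_incr z_incr U_enum V_enum wzw; split; [|split].
- exists (w 0%N); split; first by apply/U_enum; exists 0%N.
  move=> _ /V_enum[i im ->]; have /andP[lt_wz _] := wzw 0%N (leq_ltn_trans (leq0n i) im).
  exact: lt_le_trans lt_wz (increasing_upto_le z_incr (leq0n i) im).
- apply: consecutive_sep_enum w_incr U_enum _ => i im.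
  by exists (z i); [apply/V_enum; exists i|apply: wzw].
- apply: consecutive_sep_enum z_incr V_enum _ => i im.
  have /andP[_ lt1] := wzw i (ltnW im); have /andP[lt2 _] := wzw i.+1 im.
  by exists (w i.+1); [apply/U_enum; exists i.+1 => //; exact: ltnW|rewrite lt1 lt2].
Qed.

Section SignChanges.
Variable R : rcfType.

Lemma sign_changes_factor (p : {poly R}) m (a : nat -> R) :
  size p = m.+2 ->
  (forall i, (i <= m)%N -> a i < a i.+1) ->
  (forall i, (i <= m)%N -> p.[a i] * p.[a i.+1] < 0) ->
  exists2 w : nat -> R, (forall i, (i <= m)%N -> a i < w i < a i.+1) &
    p = lead_coef p *: \prod_(i < m.+1) ('X - (w i)%:P).
Proof.
move=> size_p lt_a sign_a.
have root_in i : {x | (i <= m)%N -> a i < x < a i.+1 /\ root p x}.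
  case: (leqP i m) => [im|_]; last by exists 0.
  have [x] := poly_ivtoo (ltW (lt_a i im)) (sign_a i im).
  by rewrite in_itv /= => ax rx; exists x.
pose w i := sval (root_in i).
have wP i : (i <= m)%N -> a i < w i < a i.+1 /\ root p (w i) := svalP (root_in i).
exists w => [i /wP[] //|].
have w_incr : increasing_upto m.+1 w.
  apply: increasing_upto_step => i im.
  have [/andP[_ w_lt] _] := wP i (ltnW (im : (i < m)%N)).
  by have [/andP[lt_w _] _] := wP i.+1 im; apply: lt_trans lt_w.
rewrite -(big_image _ _ (fun i : 'I_m.+1 => w i) xpredT (fun z => 'X - z%:P)).
apply: all_roots_prod_XsubC.
- by rewrite size_image card_ord.
- by apply/allP => _ /imageP[i _ ->]; have [] := wP i (ltn_ord i).
- by rewrite uniq_rootsE uniq_image_increasing.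
Qed.

Lemma poly_sign_near_infty (p : {poly R}) : 0 < lead_coef p ->
  exists B, forall x, B <= x -> 0 < p.[x] /\ 0 < (-1) ^+ (size p).-1 * p.[- x].
Proof.
move=> lc_gt0; have [B1 hB1] := poly_pinfty_gt_lc lc_gt0.
pose q := (-1) ^+ (size p).-1 *: (p \Po - 'X).
have lc_q : lead_coef q = lead_coef p.
  rewrite lead_coefZ lead_coef_comp ?size_polyN ?size_polyX // lead_coefN lead_coefX.
  by rewrite mulrCA -exprD addnn -mul2n exprM sqrrN !expr1n mulr1.
have [B2 hB2] : exists B2, forall x, B2 <= x -> lead_coef q <= q.[x].
  by apply: poly_pinfty_gt_lc; rewrite lc_q.
exists (Num.max B1 B2) => x; rewrite ge_max => /andP[xB1 xB2]; split.
  exact: lt_le_trans lc_gt0 (hB1 x xB1).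
by have := hB2 x xB2; rewrite lc_q hornerZ horner_comp !hornerE; apply: lt_le_trans.
Qed.

Lemma interlacing_factor (p : {poly R}) m (z : nat -> R) :
  size p = m.+2 -> 0 < lead_coef p -> increasing_upto m z ->
  (forall i, (i < m)%N -> 0 < (-1) ^+ (m - i) * p.[z i]) ->
  exists w : nat -> R,
    [/\ increasing_upto m.+1 w, forall i, (i < m)%N -> w i < z i < w i.+1 &
        p = lead_coef p *: \prod_(i < m.+1) ('X - (w i)%:P)].
Proof.
move=> size_p lc_gt0 z_incr z_sign.
have [B0 hB0] := poly_sign_near_infty lc_gt0.
pose B := Num.max B0 (`|z 0%N| + `|z m.-1| + 1).
have B_ge : `|z 0%N| + `|z m.-1| + 1 <= B by rewrite le_max lexx orbT.
have B_gt0 : 0 < B by have := normr_ge0 (z 0%N); have := normr_ge0 (z m.-1); lra.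
have zB i : (i < m)%N -> - B < z i < B.
  move=> im; have z0i := increasing_upto_le z_incr (leq0n i) im.
  have zim : z i <= z m.-1 by apply: increasing_upto_le z_incr _ _; lia.
  have := ler_norm (z m.-1); have := ler_norm (- z 0%N); rewrite normrN.
  by have := normr_ge0 (z 0%N); have := normr_ge0 (z m.-1); move=> *; apply/andP; split; lra.
have [pB p_B] : 0 < p.[B] /\ 0 < (-1) ^+ (size p).-1 * p.[- B].
  by apply: hB0; rewrite le_max lexx.
pose a i := if i is j.+1 then (if (j < m)%N then z j else B) else - B.
have a_lt i : (i <= m)%N -> a i < a i.+1.
  case: i => [_|i im] /=.
    by case: ifP => [m_gt0|_]; [case/andP: (zB 0%N m_gt0)|lra].
  rewrite im; case: ifP => [im1|_]; first exact: z_incr.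
  by case/andP: (zB i im).
have a_sign i : (i <= m.+1)%N -> 0 < (-1) ^+ (m.+1 - i) * p.[a i].
  case: i => [_|i im] /=; first by move: p_B; rewrite subn0 size_p.
  rewrite subSS; case: ifP => [|/negbT]; first exact: z_sign.
  rewrite -leqNgt => mi; have -> : i = m by apply/eqP; rewrite eqn_leq -ltnS im mi.
  by rewrite subnn mul1r.
have [w w_in p_eq] : exists2 w : nat -> R, (forall i, (i <= m)%N -> a i < w i < a i.+1) &
    p = lead_coef p *: \prod_(i < m.+1) ('X - (w i)%:P).
  apply: sign_changes_factor size_p a_lt _ => i im.
  by rewrite (mul_lt0_signr _ (a_sign i.+1 im)) subSS -subSn // a_sign // leqW.
have w_a_w i : (i < m)%N -> w i < a i.+1 < w i.+1.
  by move=> im; have /andP[_ ->] := w_in i (ltnW im); have /andP[-> _] := w_in i.+1 im.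
exists w; split=> // [|i im]; last by have := w_a_w i im; rewrite /= im.
apply: increasing_upto_step => i im; have /andP[lt1 lt2] := w_a_w i im.
exact: lt_trans lt2.
Qed.

End SignChanges.

Lemma root_prod_XsubC_ord (R : idomainType) N (w : nat -> R) x :
  root (\prod_(i < N) ('X - (w i)%:P)) x <-> exists2 i, (i < N)%N & x = w i.
Proof.
rewrite -(big_image _ _ (fun i : 'I_N => w i) xpredT (fun x => 'X - x%:P)) root_prod_XsubC.
split=> [/imageP[i _ ->]|[i iN ->]]; first by exists i.
by apply/imageP; exists (Ordinal iN).
Qed.

Lemma deriv_scale_prod_XsubC_neq0 (R : idomainType) (rs : seq R) c x :
  c != 0 -> uniq rs -> x \in rs -> (c *: \prod_(y <- rs) ('X - y%:P))^`().[x] != 0.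
Proof.
move=> c_neq0 rs_uniq x_in.
rewrite (perm_big _ (perm_to_rem x_in)) big_cons derivZ derivM derivXsubC.
rewrite hornerZ hornerD !hornerM hornerXsubC subrr mul0r addr0 (hornerC 1) mul1r.
rewrite mulf_neq0 // horner_prod prodf_seq_neq0; apply/allP => y y_in /=.
rewrite hornerXsubC subr_eq0; apply: contraTneq y_in => ->.
by rewrite mem_rem_uniqF.
Qed.

Lemma complex_roots_real_simple (R : rcfType) (q : {poly R}) c N (w : nat -> R) :
  c != 0 -> increasing_upto N w -> q = c *: \prod_(i < N) ('X - (w i)%:P) ->
  forall z : R[i], root (map_poly (real_complex R) q) z ->
    Im z = 0 /\ ~~ root (map_poly (real_complex R) q)^`() z.
Proof.
move=> c_neq0 w_incr q_eq z z_root.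
rewrite -(big_image _ _ (fun i : 'I_N => w i) xpredT (fun x => 'X - x%:P)) in q_eq.
have [x x_in ->] : exists2 x, x \in [seq w i | i : 'I_N] & z = real_complex R x.
  move: z_root; rewrite q_eq map_polyZ map_prod_XsubC rootZ ?fmorph_eq0 //.
  rewrite /root horner_prod prodf_seq_eq0 => /hasP[x x_in].
  by rewrite hornerXsubC subr_eq0 => /eqP ->; exists x.
split; first by rewrite -complexIm.
rewrite deriv_map /root horner_map fmorph_eq0 q_eq.
by apply: deriv_scale_prod_XsubC_neq0 => //; apply: uniq_image_increasing.
Qed.

Section HermiteZeros.
Variable R : rcfType.
Local Notation hm := (hermite_monic R).

Lemma hermite_monic_zeros m : exists z : nat -> R,
  [/\ increasing_upto m.+1 z, hm m.+1 = \prod_(i < m.+1) ('X - (z i)%:P) &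
      forall i, (i < m.+1)%N -> 0 < (-1) ^+ (m - i) * (hm m).[z i]].
Proof.
elim: m => [|m [z [z_incr hm_eq z_sign]]].
  exists (fun=> 0); split.
  - by move=> i j; rewrite !inE !ltnS !leqn0 => /eqP-> /eqP->.
  - by rewrite big_ord1 subr0 hermite_monic1.
  - move=> i; rewrite ltnS leqn0 => /eqP->.
    by rewrite subnn expr0 mul1r hermite_monic0 -polyC1 hornerC ltr01.
have root_z i : (i < m.+1)%N -> (hm m.+1).[z i] = 0.
  by move=> im; apply/eqP; rewrite -/(root _ _) hm_eq; apply/root_prod_XsubC_ord; exists i.
have z_sign2 i : (i < m.+1)%N -> 0 < (-1) ^+ (m.+1 - i) * (hm m.+2).[z i].
  move=> im; rewrite horner_hermite_monicSS root_z // mulr0 add0r subSn // exprS.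
  rewrite mulrN mulN1r mulNr opprK mulrCA; apply: mulr_gt0; last exact: z_sign.
  by rewrite divr_gt0 ?ltr0n.
have [size_hm /monicP lc_hm] := hermite_monic_size_monic R m.+2.
have [|w [w_incr zw hm2_eq]] := interlacing_factor size_hm _ z_incr z_sign2.
  by rewrite lc_hm ltr01.
exists w; split=> //; first by rewrite {1}hm2_eq lc_hm scale1r.
move=> i im; rewrite hm_eq horner_prod.
under eq_bigr do rewrite hornerXsubC.
apply: signr_prod_subr => // [j ji|j /andP[ij jm]].
  have i_gt0 : (0 < i)%N by apply: leq_ltn_trans ji.
  have i1 : (i.-1 < m.+1)%N by lia.
  have /andP[_ +] := zw i.-1 i1; rewrite prednK //; apply: le_lt_trans.
  by apply: increasing_upto_le z_incr _ i1; lia.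
have /andP[+ _] := zw i (leq_trans ij jm); move/lt_le_trans; apply.
exact: increasing_upto_le z_incr ij jm.
Qed.

End HermiteZeros.

(** * Backward recurrence estimate *)

Lemma recurrence_geometric_bound (R : realDomainType) (a : nat -> R) (c al be r C : R) N :
  0 < c -> 0 <= al -> 0 <= be -> 0 <= r -> 0 <= C -> al * r + be <= c * r ^+ 2 ->
  a 0%N <= C -> a 1%N <= C * r ->
  (forall k, (k.+2 < N)%N -> c * a k.+2 <= al * a k.+1 + be * a k) ->
  forall k, (k < N)%N -> a k <= C * r ^+ k.
Proof.
move=> c_gt0 al_ge0 be_ge0 r_ge0 C_ge0 r_le a0 a1 rec.
elim/ltn_ind => -[_|[_|k IH kN]]; rewrite ?expr0 ?mulr1 ?expr1 //.
have ih0 := IH k (ltnW (ltnSn _)) (ltnW (ltnW kN)).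
have := IH k.+1 (ltnSn _) (ltnW kN); rewrite exprSr mulrA => ih1.
have -> : C * r ^+ k.+2 = C * r ^+ k * r ^+ 2 by rewrite -mulrA -exprD addn2.
rewrite -(ler_pM2l c_gt0); apply: le_trans (rec k kN) _.
have Crk : 0 <= C * r ^+ k by rewrite mulr_ge0 // exprn_ge0.
set t := C * r ^+ k in ih0 ih1 Crk *; nra.
Qed.

Section HermiteBackward.
Variable R : realFieldType.
Local Notation hm := (hermite_monic R).

Lemma hermite_monic_backward_le N y :
  N.+1%:R * `|(hm N).[y]| <= 2 * (`|y| * `|(hm N.+1).[y]| + `|(hm N.+2).[y]|).
Proof.
have e : N.+1%:R * (hm N).[y] = 2 * (y * (hm N.+1).[y] - (hm N.+2).[y]).
  by rewrite horner_hermite_monicSS; field.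
rewrite -[N.+1%:R]ger0_norm // -normrM e normrM ger0_norm // ler_pM2l //.
by rewrite -normrM ler_normB.
Qed.

Lemma hermite_monic_backward_bound n K y u :
  root (hm n.-1) y -> y ^+ 2 <= (2 * n)%:R -> 1 <= u -> u ^+ 4 <= n%:R -> (2 * K <= n)%N ->
  forall k, (k < K)%N ->
    `|(hm (n - k.+1)).[y]| * u ^+ k <= `|(hm (n - 2)).[y]| * u / 4 * 4 ^+ k.
Proof.
move=> /eqP hy y_le u_ge1 u4_le Kn.
pose A := `|(hm (n - 2)).[y]|.
have amgm : 4 * `|y| * u + u ^+ 2 <= 4 * n%:R + 8.
  have : `|y| ^+ 2 <= 2 * n%:R by rewrite real_normK ?num_real // -natrM.
  have : 0 <= (`|y| - 2 * u) ^+ 2 := sqr_ge0 _.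
  have : 0 <= (2 * u ^+ 2 - 5 / 2) ^+ 2 := sqr_ge0 _.
  have : u ^+ 4 = (u ^+ 2) ^+ 2 by rewrite -exprM.
  nra.
have u_ge0 : 0 <= u by lra.
have A_ge0 : 0 <= A := normr_ge0 _.
have y_ge0 : 0 <= `|y| := normr_ge0 _.
apply: (@recurrence_geometric_bound _ _ (n + 2)%:R (4 * `|y| * u) (4 * u ^+ 2)).
- by rewrite ltr0n addn2.
- by rewrite !mulr_ge0.
- by rewrite mulr_ge0 // exprn_ge0.
- by [].
- by rewrite divr_ge0 // mulr_ge0.
- by rewrite natrD; lra.
- by rewrite subn1 hy normr0 mul0r divr_ge0 // mulr_ge0.
- by rewrite expr1 divfK ?lexx ?pnatr_eq0.
move=> k kK; set N := (n - k.+3)%N.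
have -> : (n - k.+2 = N.+1)%N by rewrite /N; lia.
have -> : (n - k.+1 = N.+2)%N by rewrite /N; lia.
have N_large : (n + 2)%:R <= 2 * N.+1%:R :> R by rewrite -natrM ler_nat /N; lia.
have step : (n + 2)%:R * `|(hm N).[y]| <=
              4 * `|y| * `|(hm N.+1).[y]| + 4 * `|(hm N.+2).[y]|.
  apply: le_trans (ler_wpM2r (normr_ge0 _) N_large) _.
  by have := hermite_monic_backward_le N y; lra.
have -> : 4 * `|y| * u * (`|(hm N.+1).[y]| * u ^+ k.+1) +
          4 * u ^+ 2 * (`|(hm N.+2).[y]| * u ^+ k) =
          (4 * `|y| * `|(hm N.+1).[y]| + 4 * `|(hm N.+2).[y]|) * u ^+ k.+2.
  by rewrite !exprS; ring.
by rewrite mulrA ler_wpM2r // exprn_ge0 //; lra.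
Qed.

End HermiteBackward.

(** * The polynomial q_n at the zeros of the Hermite polynomial *)

Lemma half_pow_mul_le (R : realFieldType) (a A u : R) k : 0 <= u ->
  a * u ^+ k <= A * u / 4 * 4 ^+ k -> (u / 2) ^+ k.+1 * a <= A * u ^+ 2 * 2 ^+ k.+1 / 16.
Proof.
move=> u_ge0 le_a; have pow2_gt0 : (0 : R) < 2 ^+ k by rewrite exprn_gt0.
have -> : (u / 2) ^+ k.+1 * a = u / 2 ^+ k.+1 * (a * u ^+ k).
  by rewrite exprMn exprVn !exprSr; field; rewrite gt_eqF.
have -> : A * u ^+ 2 * 2 ^+ k.+1 / 16 = u / 2 ^+ k.+1 * (A * u / 4 * 4 ^+ k).
  have -> : (4 : R) ^+ k = 2 ^+ k * 2 ^+ k by rewrite -exprMn; congr (_ ^+ _); lra.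
  by rewrite !exprSr; field; rewrite gt_eqF.
by rewrite ler_wpM2l // divr_ge0 // exprn_ge0.
Qed.

Lemma sum_pow2_from2 (R : numFieldType) K : (0 < K)%N ->
  \sum_(2 <= j < K.+1) (2 : R) ^+ j = 2 ^+ K.+1 - 4.
Proof.
elim: K => // -[_ _|K IH _]; first by rewrite big_geq // expr2; ring.
by rewrite big_nat_recr //= IH // [in RHS]exprS; ring.
Qed.

Lemma tail_bound_arith (R : realFieldType) (M u G P T n : R) :
  0 <= M -> 1 <= u -> u ^+ 4 <= n -> 1 <= P -> 1 <= T -> 4 <= n -> 0 <= G ->
  2 * T - 1 <= G * T -> P * G ^+ 2 * T ^+ 2 * M ^+ 2 <= n ->
  M * u ^+ 2 * (8 * T - 4) < 8 * (n - 1).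
Proof.
move=> M_ge0 u_ge1 u4_le P_ge1 T_ge1 n_ge4 G_ge0 GT thr.
have Mu_ge0 : 0 <= M * u ^+ 2 by rewrite mulr_ge0 // exprn_ge0 //; lra.
have GTM_ge0 : 0 <= G * T * M by rewrite !mulr_ge0 //; lra.
have GTM : (G * T * M) ^+ 2 <= n.
  have e : P * (G * T * M) ^+ 2 = P * G ^+ 2 * T ^+ 2 * M ^+ 2 by rewrite !exprMn !mulrA.
  by have := ler_peMl (sqr_ge0 (G * T * M)) P_ge1; lra.
have GTMu : G * T * M * u ^+ 2 <= n.
  have u4 : u ^+ 4 = (u ^+ 2) ^+ 2 by rewrite -exprM.
  have : (G * T * M * u ^+ 2) ^+ 2 <= n ^+ 2.
    rewrite exprMn -u4 expr2; apply: ler_pM => //; first exact: sqr_ge0.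
    by rewrite exprn_ge0 //; lra.
  have : 0 <= G * T * M * u ^+ 2 by rewrite mulr_ge0 // exprn_ge0 //; lra.
  move: (G * T * M * u ^+ 2) => X; nra.
have := ler_wpM2l Mu_ge0 GT.
have -> : M * u ^+ 2 * (G * T) = G * T * M * u ^+ 2 by ring.
lra.
Qed.

Section QPoly.
Variable R : realType.
Local Notation hm := (hermite_monic R).
Implicit Types (rho gamma : nat -> R) (nu : R).

Lemma powR_quarter_bounds nu n : 0 <= nu <= 1 / 4 -> (0 < n)%N ->
  1 <= powR n%:R nu /\ powR n%:R nu ^+ 4 <= n%:R.
Proof.
move=> /andP[nu_ge0 nu_le] n_gt0; have n_ge1 : 1 <= n%:R :> R by rewrite ler1n.
split; first by have := ler_powR n_ge1 nu_ge0; rewrite powRr0.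
rewrite -powR_mulrn ?powR_ge0 // -powRrM.
by have := @ler_powR _ n%:R n_ge1 (nu * 4%:R) 1; rewrite powRr1 ?ler0n //; apply; lra.
Qed.

Lemma rho_le_pow rho nu n :
  (forall m, 0 < rho m) -> 0 <= nu ->
  (forall m, (1 <= m)%N -> 2 * rho m.-1 / rho m <= powR m%:R nu) ->
  forall j, (j <= n)%N -> rho (n - j)%N <= rho n * (powR n%:R nu / 2) ^+ j.
Proof.
move=> rho_gt0 nu_ge0 rho_ratio; elim=> [|j IH] jn; first by rewrite subn0 expr0 mulr1.
have nj : (1 <= n - j)%N by lia.
have := rho_ratio _ nj; rewrite -subnS ler_pdivrMr // => ratio.
have pow_le : powR (n - j)%:R nu <= powR n%:R nu.
  by rewrite ge0_ler_powR // ?nnegrE ?ler0n // ler_nat leq_subr.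
have := IH (ltnW jn); rewrite exprS; set u := powR n%:R nu => IH'.
have u_ge0 : 0 <= u := powR_ge0 _ _.
have : 2 * rho (n - j.+1)%N <= u * rho (n - j)%N.
  by apply: le_trans ratio _; rewrite ler_wpM2r // ltW.
have : u / 2 * rho (n - j)%N <= u / 2 * (rho n * (u / 2) ^+ j).
  by rewrite ler_wpM2l // divr_ge0.
by rewrite mulrCA; lra.
Qed.

Lemma geom6_ge nu K : 0 <= nu -> (K.-1)%:R <= geom6 nu K.
Proof.
move=> nu_ge0; have -> : (K.-1)%:R = \sum_(j < K.-1) (1 : R) by rewrite sumr_const card_ord.
apply: ler_sum => j _.
by have := @ler_powR R 6 (ler1n R 6) 0 (nu * j%:R); rewrite powRr0; apply; rewrite mulr_ge0.
Qed.

Lemma threshold_tail_lt nu K gamma n : 0 <= nu <= 1 / 4 -> (0 < K)%N ->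
  threshold nu K gamma <= n%:R ->
  (\big[Num.max/0]_(2 <= j < K.+1) `|gamma j|) * powR n%:R nu ^+ 2 * (2 ^+ K.+1 - 4)
    < 8 * (n%:R - 1).
Proof.
move=> nu_range K_gt0; rewrite /threshold ge_max => /andP[thr]; rewrite ler_nat => Kn.
have n_gt0 : (0 < n)%N by lia.
have [u_ge1 u4_le] := powR_quarter_bounds nu_range n_gt0.
have M_ge0 : 0 <= \big[Num.max/0]_(2 <= j < K.+1) `|gamma j|.
  by apply: (big_ind (>= 0)) => // x y x0 y0; rewrite le_max x0.
have P6 : 1 <= powR 6 (2 * nu) :> R.
  by have := @ler_powR R 6 (ler1n R 6) 0 (2 * nu); rewrite powRr0; apply; lra.
have G_ge := geom6_ge K (proj1 (andP nu_range)).
move: thr G_ge M_ge0 u_ge1 u4_le.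
move: (geom6 nu K) (\big[Num.max/0]_(2 <= j < K.+1) `|gamma j|) (powR n%:R nu).
move=> G M u thr G_ge M_ge0 u_ge1 u4_le.
case: (ltnP K 2) => [K1|K2].
  have -> : K = 1%N by lia.
  have n_ge2 : 2 <= n%:R :> R by rewrite ler_nat; lia.
  by rewrite (_ : 2 ^+ 2 - 4 = 0 :> R) ?mulr0; [lra|rewrite expr2; ring].
have [T [T_ge1 pow2_K1 pow4 GT]] : exists T : R,
    [/\ 1 <= T, 2 ^+ K.+1 = 8 * T, powR 4 (K%:R - 2) = T ^+ 2 & 2 * T - 1 <= G * T].
  exists (2 ^+ (K - 2)); have T_ge1 : 1 <= 2 ^+ (K - 2) :> R by rewrite exprn_ege1 // ler1n.
  split=> //.
  - rewrite (_ : K.+1 = K - 2 + 3)%N; last by lia.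
    by rewrite exprD !exprS expr0; ring.
  - rewrite -natrB // powR_mulrn ?ler0n // -exprM mulnC exprM.
    by rewrite (_ : (2 : R) ^+ 2 = 4) // expr2 -natrM.
  - apply: le_trans (ler_wpM2r (ltW (lt_le_trans ltr01 T_ge1)) G_ge).
    case: (ltnP K 3) => K3; last first.
      have : 2 <= (K.-1)%:R :> R by rewrite ler_nat; lia.
      by move: (2 ^+ (K - 2) : R) T_ge1 => T T_ge1; nra.
    have -> : K = 2%N by lia.
    by rewrite subnn expr0 /=; lra.
have n_ge4 : 4 <= n%:R :> R by rewrite ler_nat; lia.
have G_ge0 : 0 <= G by apply: le_trans G_ge.
rewrite pow2_K1; apply: (tail_bound_arith M_ge0 u_ge1 u4_le P6 T_ge1 n_ge4 G_ge0 GT).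
by rewrite -pow4.
Qed.

Lemma horner_q_poly rho gamma K n x :
  (q_poly rho gamma K n).[x] =
  \sum_(0 <= j < K.+1) gamma j * rho (n - j)%N * (hm (n - j)).[x].
Proof. by rewrite /q_poly horner_sum; apply: eq_bigr => j _; rewrite hornerZ. Qed.

Lemma size_lead_coef_q_poly rho gamma K n : 0 < rho n -> gamma 0%N = 1 -> (0 < n)%N ->
  size (q_poly rho gamma K n) = n.+1 /\ lead_coef (q_poly rho gamma K n) = rho n.
Proof.
move=> rho_gt0 g0 n_gt0; rewrite /q_poly big_ltn // subn0 g0 mul1r.
set r := \sum_(1 <= j < K.+1) _.
have [size_hm /monicP lc_hm] := hermite_monic_size_monic R n.
have size_r : (size r <= n)%N.
  rewrite /r big_seq; apply: (big_ind (fun p : {poly R} => (size p <= n)%N)) => [|p q|j].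
  - by rewrite size_poly0.
  - by move=> *; rewrite (leq_trans (size_polyD _ _)) // geq_max; apply/andP.
  - rewrite mem_index_iota => /andP[j_ge1 _]; rewrite (leq_trans (size_scale_leq _ _)) //.
    by have [-> _] := hermite_monic_size_monic R (n - j); lia.
have size_lead : size (rho n *: hm n) = n.+1 by rewrite size_scale ?gt_eqF.
have lt_r : (size r < size (rho n *: hm n))%N by rewrite size_lead ltnS.
by rewrite size_polyDl // lead_coefDl // lead_coefZ lc_hm mulr1.
Qed.

Lemma norm_q_poly_tail_le rho gamma nu K n y :
  (forall m, 0 < rho m) -> 0 <= nu <= 1 / 4 ->
  (forall m, (1 <= m)%N -> 2 * rho m.-1 / rho m <= powR m%:R nu) ->
  (0 < K)%N -> (2 * K <= n)%N -> root (hm n.-1) y -> y ^+ 2 <= (2 * n)%:R ->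
  `|\sum_(2 <= j < K.+1) gamma j * rho (n - j)%N * (hm (n - j)).[y]| <=
  (\big[Num.max/0]_(2 <= j < K.+1) `|gamma j|) * rho n * `|(hm (n - 2)).[y]|
    * powR n%:R nu ^+ 2 / 16 * (2 ^+ K.+1 - 4).
Proof.
move=> rho_gt0 nu_range rho_ratio K_gt0 Kn hy y_le.
have [n_gt0 K_le_n] : (0 < n)%N /\ (K <= n)%N by split; lia.
have [u_ge1 u4_le] := powR_quarter_bounds nu_range n_gt0.
have rho_le := rho_le_pow (n := n) rho_gt0 (proj1 (andP nu_range)) rho_ratio.
have gamma_le j : (2 <= j)%N -> (j <= K)%N ->
    `|gamma j| <= \big[Num.max/0]_(2 <= j < K.+1) `|gamma j|.
  move=> j_ge2 jK; apply: (@le_bigmax_seq _ R nat _ 0 j xpredT (fun j => `|gamma j|)) => //.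
  by rewrite mem_index_iota j_ge2 ltnS.
move: (\big[Num.max/0]_(2 <= j < K.+1) `|gamma j|) gamma_le => M gamma_le.
move: (powR n%:R nu) rho_le u_ge1 u4_le => u rho_le u_ge1 u4_le.
have u_ge0 : 0 <= u by lra.
rewrite -sum_pow2_from2 // mulr_sumr; apply: le_trans (ler_norm_sum _ _ _) _.
rewrite big_nat [X in _ <= X]big_nat; apply: ler_sum => -[//|k] /andP[k_ge1 kK].
have M_ge0 : 0 <= M := le_trans (normr_ge0 _) (gamma_le _ k_ge1 kK).
have h_le := hermite_monic_backward_bound hy y_le u_ge1 u4_le Kn kK.
have rho_k := rho_le k.+1 (leq_trans (kK : (k.+1 <= K)%N) K_le_n).
have := ler_pM (normr_ge0 _) (ltW (rho_gt0 _)) (gamma_le _ k_ge1 kK) rho_k.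
move/(ler_wpM2r (normr_ge0 (hm (n - k.+1)).[y])) => le1.
rewrite !normrM (gtr0_norm (rho_gt0 _)); apply: le_trans le1 _.
move: `|(hm (n - k.+1)).[y]| `|(hm (n - 2)).[y]| h_le => h A h_le.
have -> : M * (rho n * (u / 2) ^+ k.+1) * h = M * rho n * ((u / 2) ^+ k.+1 * h) by ring.
have -> : M * rho n * A * u ^+ 2 / 16 * 2 ^+ k.+1 =
          M * rho n * (A * u ^+ 2 * 2 ^+ k.+1 / 16) by ring.
by rewrite ler_wpM2l ?mulr_ge0 ?(ltW (rho_gt0 n)) // half_pow_mul_le.
Qed.

Lemma q_poly_hermite_mul_lt0 rho gamma nu K n y :
  (forall m, 0 < rho m) -> 0 <= nu <= 1 / 4 ->
  (forall m, (1 <= m)%N -> 2 * rho m.-1 / rho m <= powR m%:R nu) ->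
  (0 < K)%N -> gamma 0%N = 1 -> threshold nu K gamma <= n%:R ->
  root (hm n.-1) y -> y ^+ 2 <= (2 * n)%:R -> (hm (n - 2)).[y] != 0 ->
  (q_poly rho gamma K n).[y] * (hm (n - 2)).[y] < 0.
Proof.
move=> rho_gt0 nu_range rho_ratio K_gt0 g0 thr hy y_le h_neq0.
have Kn : (2 * K <= n)%N by move: thr; rewrite /threshold ge_max ler_nat => /andP[].
have tail_lt := threshold_tail_lt nu_range K_gt0 thr.
have tail_le := norm_q_poly_tail_le gamma rho_gt0 nu_range rho_ratio K_gt0 Kn hy y_le.
have [n' en] : exists n', n = n'.+2 by exists n.-2; lia.
have n1 : n%:R - 1 = (n.-1)%:R :> R by rewrite en mulrSr addrK.
have hn : (hm n).[y] = - ((n.-1)%:R / 2) * (hm (n - 2)).[y].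
  move: hy; rewrite en /= !subSS subn0 => /eqP hy.
  by rewrite horner_hermite_monicSS hy mulr0 add0r mulNr.
rewrite horner_q_poly big_ltn // big_ltn // subn0 subn1 g0 mul1r (eqP hy) mulr0 add0r hn.
rewrite n1 in tail_lt; move: tail_le tail_lt h_neq0.
move: (\sum_(2 <= j < K.+1) gamma j * rho (n - j)%N * (hm (n - j)).[y]) ((hm (n - 2)).[y]).
move=> S h tail_le tail_lt h_neq0.
have A_gt0 : 0 < `|h| by rewrite normr_gt0.
have pos : 0 < rho n * `|h| / 16 by rewrite divr_gt0 // mulr_gt0.
have S_lt : `|S| < (n.-1)%:R * rho n * `|h| / 2.
  by apply: le_lt_trans tail_le _; move: tail_lt; rewrite -(ltr_pM2r pos); lra.
have Sh : S * h <= `|S| * `|h| by rewrite -normrM ler_norm.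
have hh : (n.-1)%:R * rho n * `|h| / 2 * `|h| = (n.-1)%:R * rho n * h ^+ 2 / 2.
  by rewrite -(real_normK (num_real h)); ring.
have S_A : `|S| * `|h| < (n.-1)%:R * rho n * `|h| / 2 * `|h| by rewrite ltr_pM2r.
lra.
Qed.

Lemma q_poly_sign_at_hermite_zeros rho gamma nu K n (z : nat -> R) :
  (forall m, 0 < rho m) -> 0 <= nu <= 1 / 4 ->
  (forall m, (1 <= m)%N -> 2 * rho m.-1 / rho m <= powR m%:R nu) ->
  (0 < K)%N -> gamma 0%N = 1 -> threshold nu K gamma <= n.+2%:R ->
  hm n.+1 = \prod_(i < n.+1) ('X - (z i)%:P) ->
  (forall i, (i < n.+1)%N -> 0 < (-1) ^+ (n - i) * (hm n).[z i]) ->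
  forall i, (i < n.+1)%N -> 0 < (-1) ^+ (n.+1 - i) * (q_poly rho gamma K n.+2).[z i].
Proof.
move=> rho_gt0 nu_range rho_ratio K_gt0 g0 thr hm_eq z_sign i im.
have z_root : root (hm n.+2.-1) (z i) by rewrite hm_eq; apply/root_prod_XsubC_ord; exists i.
rewrite subSn // -(mul_lt0_signr _ (z_sign i im)).
have y_le : z i ^+ 2 <= (2 * n.+2)%:R.
  apply: ltW; apply: lt_le_trans (root_hermite_monic_sqr_lt _ z_root) _ => //.
  by rewrite ler_nat; lia.
have n2 : (n.+2 - 2)%N = n by lia.
have h_neq0 : (hm (n.+2 - 2)).[z i] != 0.
  by rewrite n2; apply/eqP => h0; move: (z_sign i im); rewrite h0 mulr0 ltxx.
have := q_poly_hermite_mul_lt0 rho_gt0 nu_range rho_ratio K_gt0 g0 thr z_root y_le h_neq0.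
by rewrite n2.
Qed.

End QPoly.

Theorem mainTheorem6 (R : realType) (rho : nat -> R) (nu : R) (K : nat)
    (gamma : nat -> R) (n : nat) :
  (forall m, 0 < rho m) ->
  0 <= nu <= 1 / 4 ->
  (forall m, (1 <= m)%N -> 2 * rho m.-1 / rho m <= powR m%:R nu) ->
  (0 < K)%N ->
  gamma 0%N = 1 ->
  gamma K != 0 ->
  threshold nu K gamma <= n%:R ->
  let q := q_poly rho gamma K n in
  (forall z : R[i], root (map_poly (real_complex R) q) z ->
     Im z = 0 /\ ~~ root (map_poly (real_complex R) q)^`() z) /\
  interlaces (fun x : R => root q x) (fun x : R => root (hermite R n.-1) x).
Proof.
move=> rho_gt0 nu_range rho_ratio K_gt0 g0 _ thr q.
(* [gamma K != 0] only pins down K; the argument does not use it. *)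
have [n' en] : exists n', n = n'.+2.
  by move: thr; rewrite /threshold ge_max ler_nat => /andP[_ Kn]; exists n.-2; lia.
subst n; have [z [z_incr hm_eq z_sign]] := hermite_monic_zeros R n'.
have q_sign :=
  q_poly_sign_at_hermite_zeros rho_gt0 nu_range rho_ratio K_gt0 g0 thr hm_eq z_sign.
have [size_q lc_q] := size_lead_coef_q_poly K (rho_gt0 n'.+2) g0 (ltn0Sn n'.+1).
have lc_gt0 : 0 < lead_coef q by rewrite lc_q.
have [w [w_incr zw q_eq]] := interlacing_factor size_q lc_gt0 z_incr q_sign.
split; first exact: complex_roots_real_simple (lt0r_neq0 lc_gt0) w_incr q_eq.
apply: (interlaces_enum w_incr z_incr) zw => x.
  by rewrite /q {1}q_eq rootZ ?lt0r_neq0 //; apply: root_prod_XsubC_ord.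
by rewrite root_hermite hm_eq; apply: root_prod_XsubC_ord.
Qed.
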